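(* Assume the setting (S) below. If $V$ and $V'$ are proper $T$-submodules of $M$, then $V+V'$ is a proper $T$-submodule of $M$.
   Context: Setting (S): $\mathbb{F}$ is a field, $d\ge0$, and $(\{\theta_i\}_{i=0}^d;\{\theta^*_i\}_{i=0}^d;\{\zeta_i\}_{i=0}^d)$ are scalars in $\mathbb{F}$ satisfying: (C1) $\theta_i\ne\theta_j$, $\theta^*_i\ne\theta^*_j$ for $i\ne j$; (C2) $\zeta_0=1$, $\zeta_d\ne0$, $\sum_{i=0}^d\eta_{d-i}(\theta_0)\eta^*_{d-i}(\theta^*_0)\zeta_i\ne0$, where $\eta_i(\lambda)=\prod_{j=0}^{i-1}(\lambda-\theta_{d-j})$, $\eta^*_i(\lambda)=\prod_{j=0}^{i-1}(\lambda-\theta^*_{d-j})$; (C3) $\frac{\theta_{i-2}-\theta_{i+1}}{\theta_{i-1}-\theta_i}$ and $\frac{\theta^*_{i-2}-\theta^*_{i+1}}{\theta^*_{i-1}-\theta^*_i}$ are equal and independent of $i$ for $2\le i\le d-1$. Let $\tau_i(\lambda)=\prod_{j=0}^{i-1}(\lambda-\theta_j)$. For any such data satisfying (C1),(C3), $T$ denotes the associative $\mathbb{F}$-algebra with $1$ generated by $a,e_0,\dots,e_d,a^*,e^*_0,\dots,e^*_d$ with relations $e_ie_j=\delta_{ij}e_i$, $e^*_ie^*_j=\delta_{ij}e^*_i$, $\sum_ie_i=\sum_ie^*_i=1$, $a=\sum_i\theta_ie_i$, $a^*=\sum_i\theta^*_ie^*_i$, $e^*_ia^ke^*_j=0$ and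 $e_i{a^*}^ke_j=0$ whenever $0\le i,j,k\le d$, $k<|i-j|$; $e^*_0Te^*_0$ is a commutative $\mathbb{F}$-algebra with identity $e^*_0$, and $\mu:\mathbb{F}[x_1,\dots,x_d]\to e^*_0Te^*_0$ is the surjective algebra homomorphism $x_i\mapsto e^*_0\tau_i(a)e^*_0$. It is assumed (the $\mu$-conjecture) that for every $d'\ge0$ and every data $\{\theta_i\},\{\theta^*_i\}$ of length $d'+1$ satisfying (C1),(C3), the corresponding $\mu$ is an isomorphism. For $1\le i\le d$ put $g_i=e^*_0\tau_i(a)e^*_0-\zeta_ie^*_0/((\theta^*_0-\theta^*_1)\cdots(\theta^*_0-\theta^*_i))$, $J=T(1-e^*_0)+\sum_{i=1}^dTg_i$, and $M=T/J$ as a left $T$-module. *)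

From HB Require Import structures.
From mathcomp Require Import all_boot all_order all_algebra.
From mathcomp Require Import mpoly.
Set Implicit Arguments. Unset Strict Implicit. Unset Printing Implicit Defensive.
Import GRing.Theory.
Local Open Scope ring_scope.

(* The free associative F-algebra with 1 on a set X of generators, realised *)
(* as formal finite linear combinations of words (seq X); two formal sums   *)
(* denote the same element iff all their word-coefficients agree (feq).     *)
Section FreeAlg.
Variable F : fieldType.
Variable X : eqType.

Definition fa := seq (F * seq X).

Definition fcoef (p : fa) (w : seq X) : F := \sum_(t <- p | t.2 == w) t.1.
Definition feq (p q : fa) : Prop := forall w, fcoef p w = fcoef q w.

Definition fzero : fa := [::].
Definition fone : fa := [:: (1, [::])].
Definition fgen (x : X) : fa := [:: (1, [:: x])].
Definition fadd (p q : fa) : fa := p ++ q.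
Definition fscale (c : F) (p : fa) : fa := [seq (c * t.1, t.2) | t <- p].
Definition fsub (p q : fa) : fa := p ++ fscale (-1) q.
Definition fmul (p q : fa) : fa := [seq (t.1 * s.1, t.2 ++ s.2) | t <- p, s <- q].
Definition fsum (s : seq fa) : fa := flatten s.
Definition fprod (s : seq fa) : fa := foldr fmul fone s.
Definition fpow (p : fa) (k : nat) : fa := iter k (fmul p) fone.

Definition in_ideal (R : seq fa) (p : fa) : Prop :=
  exists s : seq (F * seq X * fa * seq X),
    all (fun t => t.1.2 \in R) s /\
    feq p (fsum [seq fmul (fmul [:: t.1.1] t.1.2) [:: (1, t.2)] | t <- s]).

Definition in_left_ideal (R : seq fa) (p : fa) : Prop :=
  exists s : seq (F * seq X * fa),
    all (fun t => t.2 \in R) s /\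
    feq p (fsum [seq fmul [:: t.1] t.2 | t <- s]).
End FreeAlg.

(* The algebra T for data (d, theta, thetastar).  Generators:                   *)
(*   (false, None) = a,  (false, Some i) = e_i,                              *)
(*   (true, None)  = a*, (true, Some i)  = e*_i     (0 <= i <= d).           *)
(* T = F<gen d> / in_ideal (Trels ...).                                      *)
Definition gen (d : nat) := (bool * option 'I_d.+1)%type.

Section TAlg.
Variable F : fieldType.
Variable d : nat.
Variables th ths : nat -> F.

Local Notation FA := (fa F (gen d)).

Definition gA : FA := fgen F (false, None).
Definition gAs : FA := fgen F (true, None).
Definition gE (i : nat) : FA := fgen F (false, Some (inord i)).
Definition gEs (i : nat) : FA := fgen F (true, Some (inord i)).

Definition idx := iota 0 d.+1.

Definition Trels : seq FA :=
  [seq fsub (fmul (gE i) (gE j)) (if i == j then gE i else fzero F (gen d))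
     | i <- idx, j <- idx] ++
  [seq fsub (fmul (gEs i) (gEs j)) (if i == j then gEs i else fzero F (gen d))
     | i <- idx, j <- idx] ++
  [:: fsub (fsum [seq gE i | i <- idx]) (fone F (gen d));
      fsub (fsum [seq gEs i | i <- idx]) (fone F (gen d));
      fsub gA (fsum [seq fscale (th i) (gE i) | i <- idx]);
      fsub gAs (fsum [seq fscale (ths i) (gEs i) | i <- idx])] ++
  flatten [seq [seq fmul (fmul (gEs i) (fpow gA k)) (gEs j)
                  | k <- iota 0 (maxn (i - j)%N (j - i)%N)] | i <- idx, j <- idx] ++
  flatten [seq [seq fmul (fmul (gE i) (fpow gAs k)) (gE j)
                  | k <- iota 0 (maxn (i - j)%N (j - i)%N)] | i <- idx, j <- idx].

(* membership in the defining ideal of T (i.e. "p = 0 in T") *)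
Definition inI (p : FA) : Prop := in_ideal Trels p.

Definition tau_a (i : nat) : FA :=
  fprod [seq fsub gA (fscale (th j) (fone F (gen d))) | j <- iota 0 i].

Definition Xi (i : nat) : FA := fmul (fmul (gEs 0) (tau_a i)) (gEs 0).

(* mu : F[x_1..x_d] -> e*_0 T e*_0, x_i |-> e*_0 tau_i(a) e*_0, 1 |-> e*_0;
   variable i : 'I_d of the mpoly ring stands for x_{i+1}. *)
Definition mu (p : {mpoly F[d]}) : FA :=
  fsum [seq fscale (p@_m)
              (fmul (gEs 0) (fprod [seq fpow (Xi (val i).+1) (m i) | i : 'I_d <- enum 'I_d]))
        | m <- msupp p].

Definition mu_iso : Prop :=
  (forall t : FA, exists p : {mpoly F[d]},
      inI (fsub (fmul (fmul (gEs 0) t) (gEs 0)) (mu p))) /\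
  (forall p q : {mpoly F[d]}, inI (fsub (mu p) (mu q)) -> p = q).

End TAlg.

Section Conds.
Variable F : fieldType.

Definition C1 (d : nat) (th ths : nat -> F) : Prop :=
  forall i j, (i <= d)%N -> (j <= d)%N -> i <> j -> th i <> th j /\ ths i <> ths j.

Definition eta (d : nat) (th : nat -> F) (i : nat) (lam : F) : F :=
  \prod_(j < i) (lam - th (d - j)%N).

Definition C2 (d : nat) (th ths zeta : nat -> F) : Prop :=
  [/\ zeta 0%N = 1, zeta d <> 0 &
      \sum_(i < d.+1) eta d th (d - i)%N (th 0%N) * eta d ths (d - i)%N (ths 0%N) * zeta i
        <> 0].

Definition C3 (d : nat) (th ths : nat -> F) : Prop :=
  exists beta : F, forall i, (2 <= i)%N -> (i <= d.-1)%N ->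
    (th (i - 2)%N - th i.+1) / (th i.-1 - th i) = beta /\
    (ths (i - 2)%N - ths i.+1) / (ths i.-1 - ths i) = beta.

Definition mu_conjecture : Prop :=
  forall (d' : nat) (th' ths' : nat -> F),
    C1 d' th' ths' -> C3 d' th' ths' -> mu_iso d' th' ths'.
End Conds.

(* The module M = T/J and its T-submodules, represented by their preimages   *)
(* in the free algebra F<gen d> (which surjects onto T and onto M).          *)
Section Module.
Variable F : fieldType.
Variable d : nat.
Variables th ths zeta : nat -> F.

Local Notation FA := (fa F (gen d)).

Definition gi (i : nat) : FA :=
  fsub (Xi d th i)
       (fscale (zeta i / \prod_(1 <= j < i.+1) (ths 0%N - ths j)) (gEs F d 0)).

Definition Jgens : seq FA :=
  fsub (fone F (gen d)) (gEs F d 0) :: [seq gi i | i <- iota 1 d].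

(* preimage of J = T(1 - e*_0) + sum_i T g_i in the free algebra *)
Definition inJ (p : FA) : Prop :=
  exists q r, @inI F d th ths q /\ in_left_ideal Jgens r /\ feq p (fadd q r).

(* S is (the preimage in F<gen d> of) a T-submodule of M = T/J *)
Definition is_submodM (S : FA -> Prop) : Prop :=
  [/\ forall p, inJ p -> S p,
      forall p q, S p -> S q -> S (fadd p q),
      forall t p, S p -> S (fmul t p)
    & forall p q, S p -> inJ (fsub p q) -> S q].

Definition properM (S : FA -> Prop) : Prop := exists p, ~ S p.

Definition sumM (S S' : FA -> Prop) : FA -> Prop :=
  fun p => exists q r, S q /\ S' r /\ feq p (fadd q r).
End Module.

Arguments is_submodM {F} d th ths zeta S.
Arguments inJ {F} d th ths zeta p.

(* Assuming mu is onto, every e*_0 t e*_0 is congruent modulo J to mu(p) for some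
   polynomial p, and mu(p) is congruent to a scalar multiple of e*_0, since each
   generator e*_0 tau_i(a) e*_0 acts on M = T/J as the scalar in g_i.  Hence
   e*_0 q is congruent to c e*_0 for any q.  If q lies in a submodule V and c <> 0,
   then e*_0 lies in V, and so does 1, because 1 - e*_0 lies in J.  So e*_0 V is
   contained in J for proper V.  Now if 1 = q + r with q in V and r in V', then
   e*_0 = e*_0 q + e*_0 r lies in J, hence 1 lies in J and V = M. *)
From Pilot Require Import Defs.
From mathcomp Require Import all_boot all_order all_algebra.
From mathcomp Require Import mpoly.
From mathcomp Require Import ring zify.
Set Implicit Arguments. Unset Strict Implicit. Unset Printing Implicit Defensive.
Import GRing.Theory.
Local Open Scope ring_scope.

Section FreeAlgebra.
Variable F : fieldType.
Variable X : eqType.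
Local Notation FA := (fa F X).

Lemma fcoefE (p : FA) w : fcoef p w = \sum_(u <- p) (if u.2 == w then u.1 else 0).
Proof. by rewrite /fcoef big_mkcond. Qed.

Lemma fcoef_nil w : fcoef ([::] : FA) w = 0.
Proof. by rewrite /fcoef big_nil. Qed.

Lemma fcoef_cat (p q : FA) w : fcoef (p ++ q) w = fcoef p w + fcoef q w.
Proof. by rewrite /fcoef big_cat. Qed.

Lemma fcoef_scale c (p : FA) w : fcoef (fscale c p) w = c * fcoef p w.
Proof.
rewrite !fcoefE big_map mulr_sumr; apply: eq_bigr => u _.
by case: ifP; rewrite ?mulr0.
Qed.

Lemma fcoef_sub (p q : FA) w : fcoef (fsub p q) w = fcoef p w - fcoef q w.
Proof. by rewrite fcoef_cat fcoef_scale mulN1r. Qed.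

Lemma fcoef_flatten (L : seq FA) w : fcoef (flatten L) w = \sum_(l <- L) fcoef l w.
Proof.
elim: L => [|l L IH] /=; first by rewrite big_nil fcoef_nil.
by rewrite big_cons fcoef_cat IH.
Qed.

Lemma big_fmul (G : F * seq X -> F) (x y : FA) :
  \sum_(u <- fmul x y) G u = \sum_(t <- x) \sum_(s <- y) G (t.1 * s.1, t.2 ++ s.2).
Proof.
elim: x => [|t x IH]; first by rewrite !big_nil.
by rewrite big_cons -IH /fmul /= big_cat big_map.
Qed.

Lemma cat_eqE (a b w : seq X) :
  (a ++ b == w) = (take (size a) w == a) && (b == drop (size a) w).
Proof.
apply/eqP/andP => [<-|[/eqP Ha /eqP Hb]]; last by rewrite -Ha Hb cat_take_drop.
by rewrite take_size_cat // drop_size_cat.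
Qed.

(* The coefficient of w in x y only involves coefficients of y, so it is linear in y. *)
Lemma fcoef_mul (x y : FA) w : fcoef (fmul x y) w =
  \sum_(t <- x) t.1 * (if take (size t.2) w == t.2 then fcoef y (drop (size t.2) w) else 0).
Proof.
rewrite fcoefE big_fmul; apply: eq_bigr => t _.
rewrite fcoefE; case: ifP => Ht; last by rewrite mulr0 big1 // => s _; rewrite cat_eqE Ht.
rewrite mulr_sumr; apply: eq_bigr => s _; rewrite cat_eqE Ht /= eq_sym.
by case: ifP; rewrite ?mulr0.
Qed.

Lemma fcoef_mul_linr (x q q1 q2 : FA) c w :
  (forall v, fcoef q v = fcoef q1 v + c * fcoef q2 v) ->
  fcoef (fmul x q) w = fcoef (fmul x q1) w + c * fcoef (fmul x q2) w.
Proof.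
move=> Hq; rewrite !fcoef_mul mulr_sumr -big_split; apply: eq_bigr => t _ /=.
by case: ifP => _; rewrite ?Hq; ring.
Qed.

Lemma fcoef_mulA (x y z : FA) w :
  fcoef (fmul (fmul x y) z) w = fcoef (fmul x (fmul y z)) w.
Proof.
rewrite !fcoefE !big_fmul; apply: eq_bigr => t _.
rewrite big_fmul; apply: eq_bigr => s _; apply: eq_bigr => r _ /=.
by rewrite catA mulrA.
Qed.

Lemma fcoef_scale_mull c (x q : FA) w :
  fcoef (fmul (fscale c x) q) w = c * fcoef (fmul x q) w.
Proof. by rewrite !fcoef_mul big_map mulr_sumr; apply: eq_bigr => t _ /=; ring. Qed.

Lemma fcoef_mul1r (x : FA) w : fcoef (fmul x (fone F X)) w = fcoef x w.
Proof.
rewrite !fcoefE big_fmul; apply: eq_bigr => t _.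
by rewrite big_cons big_nil cats0 mulr1 addr0.
Qed.

Lemma fcoef_mul1l (q : FA) w : fcoef (fmul (fone F X) q) w = fcoef q w.
Proof. by rewrite fcoef_mul big_cons big_nil /= take0 drop0 eqxx mul1r addr0. Qed.

Lemma fmul_monomials (x q : FA) : fmul x q = fsum [seq fmul [:: u] q | u <- x].
Proof.
elim: x => [|u x IH] //=.
by rewrite /fsum /= -/(fsum _) -IH /fmul /= cats0.
Qed.

Lemma feq_cat (p q p' q' : FA) : feq p p' -> feq q q' -> feq (p ++ q) (p' ++ q').
Proof. by move=> Hp Hq w; rewrite !fcoef_cat Hp Hq. Qed.

Lemma in_ideal_cat R (p q : FA) : in_ideal R p -> in_ideal R q -> in_ideal R (p ++ q).
Proof.
move=> [s1 [R1 E1]] [s2 [R2 E2]]; exists (s1 ++ s2).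
by rewrite all_cat R1 R2 map_cat /fsum flatten_cat; split; last exact: feq_cat.
Qed.

Lemma in_ideal_scale R c (p : FA) : in_ideal R p -> in_ideal R (fscale c p).
Proof.
move=> [s [Rs E]]; exists [seq (((c * t.1.1.1, t.1.1.2), t.1.2), t.2) | t <- s].
split; first by rewrite all_map.
move=> w; rewrite fcoef_scale E /fsum !fcoef_flatten !big_map mulr_sumr.
apply: eq_bigr => t _ /=.
rewrite -[[:: (_ * _, _)]]/(fscale c [:: t.1.1]).
by rewrite [RHS]fcoef_mulA fcoef_scale_mull -fcoef_mulA.
Qed.

Lemma in_left_ideal_cat R (p q : FA) :
  in_left_ideal R p -> in_left_ideal R q -> in_left_ideal R (p ++ q).
Proof.
move=> [s1 [R1 E1]] [s2 [R2 E2]]; exists (s1 ++ s2).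
by rewrite all_cat R1 R2 map_cat /fsum flatten_cat; split; last exact: feq_cat.
Qed.

Lemma in_left_ideal_scale R c (p : FA) : in_left_ideal R p -> in_left_ideal R (fscale c p).
Proof.
move=> [s [Rs E]]; exists [seq ((c * t.1.1, t.1.2), t.2) | t <- s].
split; first by rewrite all_map.
move=> w; rewrite fcoef_scale E /fsum !fcoef_flatten !big_map mulr_sumr.
apply: eq_bigr => t _ /=.
by rewrite -[[:: (_ * _, _)]]/(fscale c [:: t.1]) fcoef_scale_mull.
Qed.

Lemma in_left_ideal_mul R (x g : FA) : g \in R -> in_left_ideal R (fmul x g).
Proof.
move=> gR; exists [seq (u, g) | u <- x].
by rewrite all_map fmul_monomials -map_comp; split=> //; apply/allP.
Qed.

End FreeAlgebra.

Section QuotientModule.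
Variable F : fieldType.
Variable d : nat.
Variables th ths zeta : nat -> F.
Local Notation FA := (fa F (gen d)).
Local Notation one := (fone F (gen d)).
Local Notation e := (gEs F d 0).
Local Notation J := (inJ d th ths zeta).
Local Notation submod := (is_submodM d th ths zeta).

Lemma inJ_feq (p p' : FA) : J p -> feq p p' -> J p'.
Proof. by move=> [q [r [Hq [Hr E]]]] E'; exists q, r; do 2!split=> //; move=> w; rewrite -E' E. Qed.

Lemma inJ_coef0 (p : FA) : (forall w, fcoef p w = 0) -> J p.
Proof.
move=> p0; exists [::], [::]; split; first by exists [::].
by split; [exists [::] | move=> w; rewrite p0 fcoef_nil].
Qed.

Lemma inJ_add (p q : FA) : J p -> J q -> J (fadd p q).
Proof.
move=> [q1 [r1 [I1 [L1 E1]]]] [q2 [r2 [I2 [L2 E2]]]].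
exists (q1 ++ q2), (r1 ++ r2); split; first exact: in_ideal_cat.
split; first exact: in_left_ideal_cat.
by move=> w; rewrite !fcoef_cat E1 E2 !fcoef_cat; ring.
Qed.

Lemma inJ_scale c (p : FA) : J p -> J (fscale c p).
Proof.
move=> [q [r [Iq [Lr E]]]]; exists (fscale c q), (fscale c r).
split; first exact: in_ideal_scale.
split; first exact: in_left_ideal_scale.
by move=> w; rewrite fcoef_cat !fcoef_scale E fcoef_cat; ring.
Qed.

Lemma inJ_comb (p q r : FA) c : J q -> J r ->
  (forall w, fcoef p w = fcoef q w + c * fcoef r w) -> J p.
Proof.
move=> Jq Jr Ep; apply: (inJ_feq (inJ_add Jq (inJ_scale c Jr))).
by move=> w; rewrite Ep fcoef_cat fcoef_scale.
Qed.

Lemma inJ_inI (p : FA) : inI th ths p -> J p.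
Proof.
move=> Ip; exists p, [::]; do 2!split=> //; first by exists [::].
by move=> w; rewrite /fadd cats0.
Qed.

Lemma inJ_mulJgen (x g : FA) : g \in Jgens d th ths zeta -> J (fmul x g).
Proof.
move=> gJ; exists [::], (fmul x g); split; first by exists [::].
by split; first exact: in_left_ideal_mul.
Qed.

Lemma inJ_sub_mule (x : FA) : J (fsub x (fmul x e)).
Proof.
apply: (inJ_feq (inJ_mulJgen x (mem_head _ _))) => w.
rewrite (@fcoef_mul_linr _ _ x _ one e (-1)) => [|v]; rewrite fcoef_sub ?fcoef_mul1r; ring.
Qed.

Lemma inJ_e_sub1 : J (fsub e one).
Proof.
apply: (inJ_feq (inJ_scale (-1) (inJ_sub_mule one))) => w.
by rewrite fcoef_scale !fcoef_sub fcoef_mul1l; ring.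
Qed.

Definition acts_as_scalar (y : FA) :=
  exists c, forall x, J (fsub (fmul x y) (fscale c x)).

Lemma acts_as_scalar1 : acts_as_scalar one.
Proof.
by exists 1 => x; apply: inJ_coef0 => w; rewrite fcoef_sub fcoef_mul1r fcoef_scale mul1r subrr.
Qed.

Lemma acts_as_scalarM (y z : FA) :
  acts_as_scalar y -> acts_as_scalar z -> acts_as_scalar (fmul y z).
Proof.
move=> [cy Hy] [cz Hz]; exists (cy * cz) => x.
apply: (inJ_comb (Hz (fmul x y)) (Hy x) (c := cz)) => w.
by rewrite !fcoef_sub !fcoef_scale -fcoef_mulA; ring.
Qed.

Lemma acts_as_scalar_pow y k : acts_as_scalar y -> acts_as_scalar (fpow y k).
Proof. by move=> Hy; elim: k => [|k IH]; [exact: acts_as_scalar1 | exact: acts_as_scalarM]. Qed.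

Lemma acts_as_scalar_prod (I : Type) (s : seq I) (f : I -> FA) :
  (forall i, acts_as_scalar (f i)) -> acts_as_scalar (Defs.fprod [seq f i | i <- s]).
Proof. by move=> Hf; elim: s => [|i s IH]; [exact: acts_as_scalar1 | exact: acts_as_scalarM]. Qed.

Lemma acts_as_scalar_Xi i : (1 <= i <= d)%N -> acts_as_scalar (Xi d th i).
Proof.
move=> Hi; have gJ : gi d th ths zeta i \in Jgens d th ths zeta.
  by rewrite inE map_f ?orbT // mem_iota; lia.
pose k := zeta i / \prod_(1 <= j < i.+1) (ths 0%N - ths j).
exists k => x; apply: (inJ_comb (c := - k) (inJ_mulJgen x gJ) (inJ_sub_mule x)) => w.
rewrite (@fcoef_mul_linr _ _ x _ (Xi d th i) e (- k)) => [|v].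
  by rewrite !fcoef_sub fcoef_scale; ring.
by rewrite fcoef_sub fcoef_scale mulNr.
Qed.

Lemma mu_scalar_modJ (p : {mpoly F[d]}) : exists c, J (fsub (mu th p) (fscale c e)).
Proof.
rewrite /mu; elim: (msupp p) => [|m s [c IH]].
  by exists 0; apply: inJ_coef0 => w; rewrite fcoef_sub fcoef_scale fcoef_nil mul0r subrr.
have [cm Hm] : acts_as_scalar
    (Defs.fprod [seq fpow (Xi d th (val i).+1) (m i) | i : 'I_d <- enum 'I_d]).
  by apply: acts_as_scalar_prod => i; apply/acts_as_scalar_pow/acts_as_scalar_Xi; exact: ltn_ord.
exists (p@_m * cm + c); apply: (inJ_comb (c := p@_m) IH (Hm e)) => w.
by rewrite !fcoef_sub fcoef_cat !fcoef_scale; ring.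
Qed.

Lemma corner_scalar_modJ : mu_iso d th ths ->
  forall t : FA, exists c, J (fsub (fmul e t) (fscale c e)).
Proof.
move=> [mu_onto _] t; have [p Hp] := mu_onto t; have [c Hc] := mu_scalar_modJ p.
exists c; apply: (inJ_comb (c := 1) (inJ_add (inJ_sub_mule (fmul e t)) (inJ_inI Hp)) Hc).
by move=> w; rewrite [fcoef (fadd _ _) _]fcoef_cat !fcoef_sub; ring.
Qed.

Section Submodule.
Variable V : FA -> Prop.
Hypothesis V_submod : submod V.

Lemma submod_feq (p p' : FA) : V p -> feq p p' -> V p'.
Proof.
case: V_submod => _ _ _ VJ Vp E; apply: (VJ _ _ Vp).
by apply: inJ_coef0 => w; rewrite fcoef_sub E subrr.
Qed.

Lemma submod_full_of_one : V one -> forall p, V p.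
Proof.
case: V_submod => _ _ Vmul _ V1 p.
by apply: (submod_feq (Vmul p _ V1)) => w; exact: fcoef_mul1r.
Qed.

Lemma submod_full_of_corner (q : FA) c :
  V q -> J (fsub (fmul e q) (fscale c e)) -> c != 0 -> forall p, V p.
Proof.
case: V_submod => _ _ Vmul VJ Vq Jq c0.
have Vce : V (fscale c e) by apply: VJ (Vmul e _ Vq) Jq.
have Ve : V e.
  apply: (submod_feq (Vmul [:: (c^-1, [::])] _ Vce)) => w.
  rewrite fcoef_mul big_cons big_nil /= take0 drop0 eqxx addr0.
  by rewrite (fcoef_scale c e) mulrA mulVf // mul1r.
exact/submod_full_of_one/(VJ _ _ Ve inJ_e_sub1).
Qed.

Lemma proper_submod_mule : mu_iso d th ths -> properM V ->
  forall q, V q -> J (fmul e q).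
Proof.
move=> Hmu [p Vp] q Vq; have [c Hc] := corner_scalar_modJ Hmu q.
have [/eqP c0|c0] := boolP (c == 0); last by case: Vp; exact: submod_full_of_corner Hc c0 p.
by apply: (inJ_feq Hc) => w; rewrite fcoef_sub fcoef_scale c0 mul0r subr0.
Qed.

End Submodule.

Lemma sumM_submod (V V' : FA -> Prop) : submod V -> submod V' -> submod (sumM V V').
Proof.
move=> [VJ Vadd Vmul _] [V'J V'add V'mul V'sub]; split.
- move=> p Jp; exists p, [::]; split; first exact: VJ.
  split; first by apply/V'J/inJ_coef0 => w; exact: fcoef_nil.
  by move=> w; rewrite fcoef_cat fcoef_nil addr0.
- move=> p p' [q [r [Vq [Vr E]]]] [q' [r' [Vq' [Vr' E']]]].
  exists (fadd q q'), (fadd r r'); split; last split; [exact: Vadd | exact: V'add |].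
  by move=> w; rewrite !fcoef_cat E E' !fcoef_cat; ring.
- move=> t p [q [r [Vq [Vr E]]]].
  exists (fmul t q), (fmul t r); split; last split; [exact: Vmul | exact: V'mul |].
  move=> w; rewrite fcoef_cat (@fcoef_mul_linr _ _ t p q r 1) ?mul1r // => v.
  by rewrite E fcoef_cat mul1r.
- move=> p p' [q [r [Vq [Vr E]]]] Jpp'.
  exists q, (fsub p' q); split=> //; split; last by move=> w; rewrite fcoef_cat fcoef_sub; ring.
  by apply: (V'sub _ _ Vr); apply: (inJ_feq Jpp') => w; rewrite !fcoef_sub E fcoef_cat; ring.
Qed.

Lemma sumM_proper (V V' : FA -> Prop) : mu_iso d th ths ->
  submod V -> properM V -> submod V' -> properM V' -> properM (sumM V V').
Proof.
move=> Hmu HV PV HV' PV'; exists one => -[q [r [Vq [V'r E]]]].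
have Je : J e.
  apply: (inJ_comb (c := 1) (proper_submod_mule HV Hmu PV Vq)
                            (proper_submod_mule HV' Hmu PV' V'r)) => w.
  rewrite -(fcoef_mul1r e); apply: fcoef_mul_linr => v.
  by rewrite E fcoef_cat mul1r.
have J1 : J one.
  by apply: (inJ_comb (c := -1) Je inJ_e_sub1) => w; rewrite fcoef_sub; ring.
have [VJ _ _ _] := HV; have [p nVp] := PV.
exact/nVp/(submod_full_of_one HV (VJ _ J1)).
Qed.

End QuotientModule.

(* Only the surjectivity of mu (for this d) is needed. *)
Theorem lemma9p2 (F : fieldType) (d : nat) (th ths zeta : nat -> F) :
  C1 d th ths -> C2 d th ths zeta -> C3 d th ths -> mu_conjecture F ->
  forall V V' : fa F (gen d) -> Prop,
    is_submodM d th ths zeta V -> properM V ->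
    is_submodM d th ths zeta V' -> properM V' ->
    is_submodM d th ths zeta (sumM V V') /\ properM (sumM V V').
Proof.
move=> HC1 _ HC3 mu_conj V V' HV PV HV' PV'.
split; first exact: sumM_submod HV HV'.
exact: sumM_proper (mu_conj d th ths HC1 HC3) HV PV HV' PV'.
Qed.
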